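(* Let $n\ge 3$, $m\ge 2$, and $F,R$ be as in the context. Suppose that for integers $a_{ij}$ ($1\le i<j-1\le n-2$), $b_i,c_i$ ($1\le i\le n-2$), $d_i$ ($1\le i\le n-3$) the element $$w=\prod_{i<j-1}[s_i,s_j]^{a_{ij}}\cdot\prod_i[s_i,s_{i+1},s_i]^{b_i}\cdot\prod_i[s_i,s_{i+1},s_is_{i+1}^{-1}]^{c_i}\cdot\prod_i[[s_i,s_{i+1}],[s_{i+1},s_{i+2}]]^{d_i}$$ lies in $[R,F]$. Then $m\mid a_{ij}$ for all $i,j$, $m\mid b_i$ and $\gcd\!\big(m,\binom{m}{2}\big)\mid c_i$ for all $i$, and $\gcd(2,m)\mid d_i$ for all $i$.
   Context: Commutator conventions: $[a,b]=a^{-1}b^{-1}ab$, $a^b=b^{-1}ab$, and commutators are left-normed: $[a_1,\dots,a_k]=[[a_1,\dots,a_{k-1}],a_k]$. Let $F$ be the free group on $s_1,\dots,s_{n-1}$ and let $R$ be the normal closure in $F$ of the following relators: $s_i^m$ ($1\le i\le n-1$); $[s_i,s_j]$ ($1\le i<j-1\le n-2$); $[s_i,s_{i+1},s_i]$ and $[s_i,s_{i+1},s_{i+1}]$ ($1\le i\le n-2$); $[[s_i,s_{i+1}],[s_{i+1},s_{i+2}]]$ ($1\le i\le n-3$). It is known that $F/R\cong \mathrm{UT}_n(\mathbb Z/m\mathbb Z)$ via $s_i\mapsto I+E_{i,i+1}$. *)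

(* Free group F on s_1..s_{n-1} modelled by words over
   letters (i, inverted?) with i in 1..n-1, modulo free reduction; subgroups
   are predicates on words closed under free insertion/deletion of x x^-1. *)
From HB Require Import structures.
From mathcomp Require Import all_boot all_order all_algebra.
Set Implicit Arguments. Unset Strict Implicit. Unset Printing Implicit Defensive.
Import GRing.Theory Num.Theory.

Definition letter := (nat * bool)%type.   (* (i, false) = s_i, (i, true) = s_i^-1 *)
Definition word := seq letter.
Definition linv (x : letter) : letter := (x.1, ~~ x.2).
Definition winv (w : word) : word := rev (map linv w).
Definition gen (i : nat) : word := [:: (i, false)].
Definition comm (u v : word) : word := winv u ++ winv v ++ u ++ v.
Definition wpow (w : word) (z : int) : word :=
  match z with
  | Posz k => flatten (nseq k w)
  | Negz k => flatten (nseq k.+1 (winv w))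
  end.
Definition letter_on (n : nat) (x : letter) : bool := (0 < x.1 < n)%N.
Definition word_on (n : nat) (w : word) : bool := all (letter_on n) w.

(* defining relators of UT_n(Z/mZ) *)
Definition is_relator (n m : nat) (r : word) : Prop :=
  (exists i, [/\ 1 <= i, i <= n - 1 & r = flatten (nseq m (gen i))]%N)
  \/ (exists i j, [/\ 1 <= i, i + 2 <= j, j <= n - 1 & r = comm (gen i) (gen j)]%N)
  \/ (exists i, [/\ 1 <= i, i <= n - 2 &
        (r = comm (comm (gen i) (gen i.+1)) (gen i)
         \/ r = comm (comm (gen i) (gen i.+1)) (gen i.+1))]%N)
  \/ (exists i, [/\ 1 <= i, i <= n - 3 &
        r = comm (comm (gen i) (gen i.+1)) (comm (gen i.+1) (gen i.+2))]%N).

(* membership in R = normal closure of the relators in F *)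
Inductive inR (n m : nat) : word -> Prop :=
| R_rel r : is_relator n m r -> inR n m r
| R_nil : inR n m [::]
| R_mul u v : inR n m u -> inR n m v -> inR n m (u ++ v)
| R_inv u : inR n m u -> inR n m (winv u)
| R_conj u g : word_on n g -> inR n m u -> inR n m (winv g ++ u ++ g)
| R_ins u v x : letter_on n x -> inR n m (u ++ v) -> inR n m (u ++ x :: linv x :: v)
| R_del u v x : inR n m (u ++ x :: linv x :: v) -> inR n m (u ++ v).

(* membership in [R,F] = subgroup generated by [r,f], r in R, f in F *)
Inductive inRF (n m : nat) : word -> Prop :=
| RF_gen r f : inR n m r -> word_on n f -> inRF n m (comm r f)
| RF_nil : inRF n m [::]
| RF_mul u v : inRF n m u -> inRF n m v -> inRF n m (u ++ v)
| RF_inv u : inRF n m u -> inRF n m (winv u)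
| RF_ins u v x : letter_on n x -> inRF n m (u ++ v) -> inRF n m (u ++ x :: linv x :: v)
| RF_del u v x : inRF n m (u ++ x :: linv x :: v) -> inRF n m (u ++ v).

(* the element w of the theorem; products taken in increasing (lexicographic) index order *)
Definition w_elem (n : nat) (a : nat -> nat -> int) (b c d : nat -> int) : word :=
  flatten [seq wpow (comm (gen i) (gen j)) (a i j)
          | i <- iota 1 (n - 2), j <- iota (i + 2) (n - (i + 2))]
  ++ flatten [seq wpow (comm (comm (gen i) (gen i.+1)) (gen i)) (b i) | i <- iota 1 (n - 2)]
  ++ flatten [seq wpow (comm (comm (gen i) (gen i.+1)) (gen i ++ winv (gen i.+1))) (c i)
             | i <- iota 1 (n - 2)]
  ++ flatten [seq wpow (comm (comm (gen i) (gen i.+1)) (comm (gen i.+1) (gen i.+2))) (d i)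
             | i <- iota 1 (n - 3)].

(* If the images of the generators s_i in a group G make the image of every
   relator commute with all of them, then R is mapped to such elements and
   [R, F] is mapped to 1 (inRF_trivial).  Each coefficient of w is isolated by
   a test homomorphism supported on two or three generators which sends every
   building block of w into a central line Z : int -> G, so that w is sent to
   Z of a multiple of that single coefficient (far_test, adjacent_test and
   triple_test, proved for an arbitrary group G).  The test elements are
   explicit matrices of the unitriangular group UT_5(T), for T = Z/m, Z/2m or
   Z/2, whose (1,4) and (1,5) entries carry the central lines; reading that
   entry gives m | a_ij, m | b_i (from 2 b_i = 0 in Z/2m), gcd(m, C(m,2)) | c_i
   (from (m/gcd) c_i = 0 in Z/m) and, for even m, 2 | d_i (in Z/2). *)

From HB Require Import structures.
From mathcomp Require Import all_boot all_order all_algebra.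
From mathcomp Require Import ring zify.
Set Implicit Arguments. Unset Strict Implicit. Unset Printing Implicit Defensive.
Import GRing.Theory.

Section Evaluation.
Local Open Scope group_scope.
Variables (G : groupType) (img : nat -> G).

Definition ev_letter (x : letter) : G := if x.2 then (img x.1)^-1 else img x.1.
Definition ev (w : word) : G := \prod_(x <- w) ev_letter x.

Lemma ev_nil : ev [::] = 1.
Proof. exact: big_nil. Qed.

Lemma ev_cat u v : ev (u ++ v) = ev u * ev v.
Proof. exact: big_cat. Qed.

Lemma ev_letter_linv x : ev_letter (linv x) = (ev_letter x)^-1.
Proof. by case: x => i []; rewrite /ev_letter /= ?invgK. Qed.

Lemma ev_winv w : ev (winv w) = (ev w)^-1.
Proof.
rewrite /ev /winv -map_rev big_map.
under eq_bigr do rewrite ev_letter_linv.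
by rewrite prodgV revK.
Qed.

Lemma ev_gen i : ev (gen i) = img i.
Proof. exact: big_seq1. Qed.

Lemma ev_comm u v : ev (comm u v) = [~ ev u, ev v].
Proof. by rewrite /comm !ev_cat !ev_winv. Qed.

Lemma ev_nseq w k : ev (flatten (nseq k w)) = ev w ^+ k.
Proof. by rewrite /ev big_flatten big_nseq iter_mulg_1. Qed.

Lemma ev_cancel u v x : ev (u ++ x :: linv x :: v) = ev (u ++ v).
Proof. by rewrite !ev_cat /ev !big_cons ev_letter_linv mulVKg. Qed.

Definition central (g : G) : Prop := forall k, commute g (img k).

Lemma central_ev g w : central g -> commute g (ev w).
Proof.
by move=> cg; apply: commute_prod => -[i []] _; rewrite /ev_letter /=;
  [apply: commuteV | apply: cg].
Qed.

Lemma central1 : central 1.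
Proof. by move=> k; apply/commute_sym/commute1. Qed.

Lemma centralM g h : central g -> central h -> central (g * h).
Proof. by move=> cg ch k; apply/commute_sym/commuteM; apply/commute_sym. Qed.

Lemma centralV g : central g -> central g^-1.
Proof. by move=> cg k; apply/commute_sym/commuteV/commute_sym. Qed.

Section NormalClosure.
Variables n m : nat.
Hypothesis relator_central : forall r, is_relator n m r -> central (ev r).

(* If all relators are sent to central elements, so is every element of R:
   the central elements form a subgroup on which conjugation is trivial. *)
Lemma inR_central u : inR n m u -> central (ev u).
Proof.
elim=> {u}.
- exact: relator_central.
- by rewrite ev_nil; exact: central1.
- by move=> u v _ cu _ cv; rewrite ev_cat; apply: centralM.
- by move=> u _ cu; rewrite ev_winv; apply: centralV.
- by move=> u g _ _ cu; rewrite !ev_cat ev_winv (central_ev g cu) mulKg.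
- by move=> u v x _ _; rewrite ev_cancel.
- by move=> u v x _; rewrite ev_cancel.
Qed.

Lemma inRF_trivial u : inRF n m u -> ev u = 1.
Proof.
elim=> {u}.
- by move=> r f /inR_central cr _; rewrite ev_comm; apply/eqP/commgP/central_ev.
- exact: ev_nil.
- by move=> u v _ eu _ ev_v; rewrite ev_cat eu ev_v mulg1.
- by move=> u _ eu; rewrite ev_winv eu invg1.
- by move=> u v x _ _; rewrite ev_cancel.
- by move=> u v x _; rewrite ev_cancel.
Qed.

End NormalClosure.

Lemma relators_central n m :
  (forall i, central (img i ^+ m)) ->
  (forall i j, (i + 2 <= j)%N -> central [~ img i, img j]) ->
  (forall i, central [~ img i, img i.+1, img i]) ->
  (forall i, central [~ img i, img i.+1, img i.+1]) ->
  (forall i, central [~ [~ img i, img i.+1], [~ img i.+1, img i.+2]]) ->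
  forall r, is_relator n m r -> central (ev r).
Proof.
move=> cpow cfar c3l c3r c4 r.
case=> [[i [_ _ ->]]|[[i [j [_ ij _ ->]]]|[[i [_ _ [->|->]]]|[i [_ _ ->]]]]].
all: by rewrite ?ev_nseq ?ev_comm ?ev_gen; auto.
Qed.

(* A homomorphism [Z] from the additive group of the integers to [G]: the
   "central line" in which the test homomorphisms record coefficients. *)
Section CentralLine.
Variable Z : int -> G.
Hypothesis ZD : {morph Z : a b / (a + b)%R >-> a * b}.

Lemma Z0 : Z 0 = 1.
Proof. by apply: (@mulgI _ (Z 0)); rewrite -ZD addr0 mulg1. Qed.

Lemma ZN c : Z (- c) = (Z c)^-1.
Proof. by apply: (@mulgI _ (Z c)); rewrite -ZD subrr Z0 mulgV. Qed.

Lemma ZX c k : Z c ^+ k = Z (c * k%:Z).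
Proof.
elim: k => [|k IHk]; first by rewrite mulr0 Z0.
by rewrite expgS IHk -ZD intS mulrDr mulr1.
Qed.

Lemma ev_wpow w c z : ev w = Z c -> ev (wpow w z) = Z (c * z).
Proof.
move=> ew; case: z => k; rewrite /wpow ev_nseq ?ev_winv ew ?ZX //.
by rewrite -ZN ZX NegzE mulrN mulNr.
Qed.

Lemma ev_flatten (s : seq word) : ev (flatten s) = \prod_(u <- s) ev u.
Proof. exact: big_flatten. Qed.

Lemma prod_Z (A : eqType) (s : seq A) (g : A -> G) (f : A -> int) :
  (forall x, x \in s -> g x = Z (f x)) -> \prod_(x <- s) g x = Z (\sum_(x <- s) f x)%R.
Proof.
by move=> egf; rewrite (big_morph Z ZD Z0); apply: eq_big_seq.
Qed.

Lemma ev_w_elem n (ka : nat -> nat -> int) (kb kc kd : nat -> int) a b c d :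
  (forall i j, (i + 2 <= j)%N -> [~ img i, img j] = Z (ka i j)) ->
  (forall i, [~ img i, img i.+1, img i] = Z (kb i)) ->
  (forall i, [~ img i, img i.+1, img i / img i.+1] = Z (kc i)) ->
  (forall i, [~ [~ img i, img i.+1], [~ img i.+1, img i.+2]] = Z (kd i)) ->
  ev (w_elem n a b c d) =
  Z (\sum_(i <- iota 1 (n - 2)) \sum_(j <- iota (i + 2) (n - (i + 2))) ka i j * a i j
     + \sum_(i <- iota 1 (n - 2)) kb i * b i
     + \sum_(i <- iota 1 (n - 2)) kc i * c i
     + \sum_(i <- iota 1 (n - 3)) kd i * d i)%R.
Proof.
move=> eA eB eC eD; rewrite /w_elem !ev_cat !ev_flatten !ZD mulgA mulgA.
congr (_ * _ * _ * _); rewrite ?big_allpairs_dep ?big_map; apply: prod_Z => i _.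
- apply: prod_Z => j; rewrite mem_iota => /andP[ij _].
  by apply: ev_wpow; rewrite ev_comm !ev_gen eA.
- by apply: ev_wpow; rewrite !ev_comm !ev_gen eB.
- by apply: ev_wpow; rewrite !ev_comm ev_cat ev_winv !ev_gen eC.
- by apply: ev_wpow; rewrite !ev_comm !ev_gen eD.
Qed.
End CentralLine.
End Evaluation.

Arguments ev_w_elem {G img Z} ZD {n} ka kb kc kd {a b c d}.

(* Test images: the generators at two positions [i0 < j0] ([pt2]) or at three
   consecutive positions ([pt3]) are sent to given elements, all others to 1.
   Commutator expressions that vanish as soon as one argument is 1 can then
   only be non-trivial at the support. *)
Section TestImages.
Local Open Scope group_scope.
Variable G : groupType.

Definition vanishing2 (E : G -> G -> G) : Prop :=
  forall x y, x = 1 \/ y = 1 -> E x y = 1.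
Definition vanishing3 (F : G -> G -> G -> G) : Prop :=
  forall x y z, x = 1 \/ y = 1 \/ z = 1 -> F x y z = 1.

Lemma commg_vanishing : vanishing2 (@commg G).
Proof. by move=> x y [] ->; rewrite ?comm1g ?commg1. Qed.

Lemma commgl_vanishing (E : G -> G -> G) :
  vanishing2 (fun x y => [~ x, y, E x y]).
Proof. by move=> x y [] ->; rewrite ?comm1g ?commg1 ?comm1g. Qed.

Lemma commgg_vanishing : vanishing3 (fun x y z => [~ [~ x, y], [~ y, z]]).
Proof. by move=> x y z [|[]] ->; rewrite ?comm1g ?commg1 ?comm1g ?commg1. Qed.

Variables (X Y W : G) (i0 : nat).

Definition pt2 (j0 k : nat) : G := if k == i0 then X else if k == j0 then Y else 1.

Definition pt3 (k : nat) : G :=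
  if k == i0 then X else if k == i0.+1 then Y else if k == i0.+2 then W else 1.

Ltac index_cases := rewrite /pt3 /pt2;
  repeat (case: eqP => ?); try (exfalso; lia).

Lemma pt3_far (E : G -> G -> G) i j : vanishing2 E -> (i + 2 <= j)%N ->
  E (pt3 i) (pt3 j) = if (i == i0) && (j == i0.+2) then E X W else 1.
Proof.
by move=> vE ij; index_cases; rewrite ?andbF ?andbT //; apply: vE; tauto.
Qed.

Lemma pt3_adj (E : G -> G -> G) i : vanishing2 E ->
  E (pt3 i) (pt3 i.+1) = if i == i0 then E X Y else if i == i0.+1 then E Y W else 1.
Proof. by move=> vE; index_cases; try (apply: vE; tauto). Qed.

Lemma pt3_triple (F : G -> G -> G -> G) i : vanishing3 F ->
  F (pt3 i) (pt3 i.+1) (pt3 i.+2) = if i == i0 then F X Y W else 1.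
Proof. by move=> vF; index_cases; try (apply: vF; tauto). Qed.

Lemma pt3_ind (P : G -> Prop) : P 1 -> P X -> P Y -> P W -> forall k, P (pt3 k).
Proof. by move=> P1 PX PY PW k; rewrite /pt3; do !case: ifP. Qed.

Section TwoPoints.
Variable j0 : nat.
Hypothesis i0j0 : (i0.+1 < j0)%N.

Lemma pt2_far (E : G -> G -> G) i j : vanishing2 E -> (i + 2 <= j)%N ->
  E (pt2 j0 i) (pt2 j0 j) = if (i == i0) && (j == j0) then E X Y else 1.
Proof.
by move=> vE ij; index_cases; rewrite ?andbF ?andbT //; apply: vE; tauto.
Qed.

Lemma pt2_adj (E : G -> G -> G) i : vanishing2 E -> E (pt2 j0 i) (pt2 j0 i.+1) = 1.
Proof. by move=> vE; index_cases; apply: vE; tauto. Qed.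

Lemma pt2_triple (F : G -> G -> G -> G) i : vanishing3 F ->
  F (pt2 j0 i) (pt2 j0 i.+1) (pt2 j0 i.+2) = 1.
Proof. by move=> vF; index_cases; apply: vF; tauto. Qed.

Lemma pt2_ind (P : G -> Prop) : P 1 -> P X -> P Y -> forall k, P (pt2 j0 k).
Proof. by move=> P1 PX PY k; rewrite /pt2; do !case: ifP. Qed.

End TwoPoints.
End TestImages.

Arguments pt2_far {G X Y i0 j0 i0j0} E {i j}.
Arguments pt2_adj {G X Y i0 j0 i0j0} E {i}.
Arguments pt2_triple {G X Y i0 j0 i0j0} F {i}.
Arguments pt2_ind {G X Y i0 j0} P.
Arguments pt3_ind {G X Y W i0} P.
Arguments pt3_far {G X Y W i0} E {i j}.
Arguments pt3_adj {G X Y W i0} E {i}.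
Arguments pt3_triple {G X Y W i0} F {i}.

Lemma sum_pick (s : seq nat) i0 (F : nat -> int) :
  uniq s -> i0 \in s -> (forall i, i != i0 -> F i = 0) -> (\sum_(i <- s) F i = F i0)%R.
Proof.
by move=> us s_i0 F0; rewrite (bigD1_seq i0) //= big1 ?addr0 // => i /F0.
Qed.

Lemma sum_delta (s : seq nat) i0 (x : int) (f : nat -> int) : uniq s -> i0 \in s ->
  (\sum_(i <- s) (if i == i0 then x else 0) * f i = x * f i0)%R.
Proof.
move=> us s_i0; rewrite (sum_pick us s_i0) ?eqxx // => i.
by move/negbTE => ->; rewrite mul0r.
Qed.

Lemma sum_mul0 (s : seq nat) (f : nat -> int) : (\sum_(i <- s) 0 * f i = 0)%R.
Proof. by rewrite big1 // => i _; rewrite mul0r. Qed.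

Section Tests.
Local Open Scope group_scope.
Variables (G : groupType) (Z : int -> G).
Hypothesis ZD : {morph Z : x y / (x + y)%R >-> x * y}.
Variables (n m : nat) (a : nat -> nat -> int) (b c d : nat -> int).
Hypothesis w_RF : inRF n m (w_elem n a b c d).

Lemma central_pt2 (X Y : G) i0 j0 g : commute g X -> commute g Y -> central (pt2 X Y i0 j0) g.
Proof. by move=> gX gY k; apply: pt2_ind => //; apply: commute1. Qed.

Lemma central_pt3 (X Y W : G) i0 g :
  commute g X -> commute g Y -> commute g W -> central (pt3 X Y W i0) g.
Proof. by move=> gX gY gW k; apply: pt3_ind => //; apply: commute1. Qed.

Lemma if_Z (bb : bool) (g : G) k : g = Z k -> (if bb then g else 1) = Z (if bb then k else 0).
Proof. by case: bb; rewrite ?(Z0 ZD). Qed.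

Lemma far_test (X Y : G) i0 j0 alpha :
  (forall k, commute (Z k) X) -> (forall k, commute (Z k) Y) ->
  X ^+ m = 1 -> Y ^+ m = 1 -> [~ X, Y] = Z alpha ->
  (1 <= i0)%N -> (i0 + 2 <= j0)%N -> (j0 <= n - 1)%N ->
  Z (alpha * a i0 j0) = 1.
Proof.
move=> ZX ZY Xm Ym eXY i0_ge1 i0j0 j0_le.
set img := pt2 X Y i0 j0.
have cZ k : central img (Z k) by apply: central_pt2.
have Xj0 : (i0.+1 < j0)%N by lia.
have cfar i j : (i + 2 <= j)%N -> [~ img i, img j] = Z (if (i == i0) && (j == j0) then alpha else 0).
  by move=> ij; rewrite (pt2_far (@commg G)) //; [apply: if_Z | apply: commg_vanishing].
have triv E i : vanishing2 E -> E (img i) (img i.+1) = Z 0.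
  by move=> vE; rewrite (Z0 ZD) (pt2_adj E).
have triv3 i : [~ [~ img i, img i.+1], [~ img i.+1, img i.+2]] = Z 0.
  by rewrite (Z0 ZD) (pt2_triple (fun x y z => [~ [~ x, y], [~ y, z]])) //;
    apply: commgg_vanishing.
have rel : forall r, is_relator n m r -> central img (ev img r).
  apply: relators_central => [i|i j /cfar ->|i|i|i] //.
  - apply: (pt2_ind (fun x => central img (x ^+ m)));
    by rewrite ?expg1n ?Xm ?Ym; apply: central1.
  - by rewrite (triv (fun x y => [~ x, y, x])) //; apply: commgl_vanishing.
  - by rewrite (triv (fun x y => [~ x, y, y])) //; apply: commgl_vanishing.
  - by rewrite triv3.
have := inRF_trivial rel w_RF.
rewrite (ev_w_elem ZD (fun i j => if (i == i0) && (j == j0) then alpha else 0)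
          (fun=> 0) (fun=> 0) (fun=> 0)) // => [|i|i]; last 2 first.
- exact: triv (fun x y => [~ x, y, x]) _ (commgl_vanishing _).
- exact: triv (fun x y => [~ x, y, x / y]) _ (commgl_vanishing _).
rewrite !sum_mul0 !addr0 (sum_pick (iota_uniq _ _) (i0 := i0)); last 2 first.
- by rewrite mem_iota; lia.
- by move=> i /negbTE i_i0; rewrite big1 // => j _; rewrite i_i0 mul0r.
rewrite (sum_pick (iota_uniq _ _) (i0 := j0)) ?eqxx //.
- by rewrite mem_iota; lia.
- by move=> j /negbTE ->; rewrite andbF mul0r.
Qed.

Lemma adjacent_test (X Y : G) i0 beta beta' gamma :
  (forall k, commute (Z k) X) -> (forall k, commute (Z k) Y) ->
  commute (X ^+ m) Y -> commute (Y ^+ m) X ->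
  [~ X, Y, X] = Z beta -> [~ X, Y, Y] = Z beta' -> [~ X, Y, X / Y] = Z gamma ->
  (1 <= i0)%N -> (i0 <= n - 2)%N ->
  Z (beta * b i0 + gamma * c i0) = 1.
Proof.
move=> ZX ZY XmY YmX eXYX eXYY eXYXY i0_ge1 i0_le.
pose img := pt3 X Y 1 i0.
have cZ k : central img (Z k) by apply: central_pt3 => //; apply: commute1.
have adj E k i : vanishing2 E -> E X Y = Z k -> E (img i) (img i.+1) = Z (if i == i0 then k else 0).
  by move=> vE eE; rewrite (pt3_adj E) // (vE Y 1) ?if_same; [exact: if_Z | right].
have far i j : (i + 2 <= j)%N -> [~ img i, img j] = Z 0.
  by move=> ij; rewrite (pt3_far (@commg G)) // ?commg1 ?(Z0 ZD) ?if_same //; apply: commg_vanishing.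
have rel : forall r, is_relator n m r -> central img (ev img r).
  apply: relators_central => [i|i j /far ->|i|i|i] //.
  - apply: (pt3_ind (fun x => central img (x ^+ m))); rewrite ?expg1n; try exact: central1.
    + by apply: central_pt3 => //; [exact/commute_sym/commuteX/commute_refl | exact: commute1].
    + by apply: central_pt3 => //; [exact/commute_sym/commuteX/commute_refl | exact: commute1].
  - by rewrite (adj (fun x y => [~ x, y, x]) beta) //; apply: commgl_vanishing.
  - by rewrite (adj (fun x y => [~ x, y, y]) beta') //; apply: commgl_vanishing.
  - rewrite (pt3_triple (fun x y z => [~ [~ x, y], [~ y, z]])); last exact: commgg_vanishing.
    by rewrite commg1 commg1 if_same; apply: central1.
have := inRF_trivial rel w_RF.
rewrite (ev_w_elem ZD (fun _ _ => 0) (fun i => if i == i0 then beta else 0)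
          (fun i => if i == i0 then gamma else 0) (fun=> 0)) // => [|i|i|i]; last first.
- rewrite (pt3_triple (fun x y z => [~ [~ x, y], [~ y, z]])); last exact: commgg_vanishing.
  by rewrite commg1 commg1 if_same (Z0 ZD).
- by rewrite (adj (fun x y => [~ x, y, x / y]) gamma) //; apply: commgl_vanishing.
- by rewrite (adj (fun x y => [~ x, y, x]) beta) //; apply: commgl_vanishing.
have i0_in : i0 \in iota 1 (n - 2) by rewrite mem_iota; lia.
rewrite big1 => [|i _]; last exact: sum_mul0.
by rewrite !sum_delta ?iota_uniq // sum_mul0 add0r addr0.
Qed.

Lemma triple_test (X Y W : G) i0 delta :
  (forall k, commute (Z k) X) -> (forall k, commute (Z k) Y) -> (forall k, commute (Z k) W) ->
  X ^+ m = 1 -> Y ^+ m = 1 -> W ^+ m = 1 -> commute X W ->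
  commute [~ X, Y] X -> commute [~ X, Y] Y -> commute [~ Y, W] Y -> commute [~ Y, W] W ->
  [~ [~ X, Y], [~ Y, W]] = Z delta ->
  (1 <= i0)%N -> (i0 <= n - 3)%N ->
  Z (delta * d i0) = 1.
Proof.
move=> ZX ZY ZW Xm Ym Wm cXW cXYX cXYY cYWY cYWW eXYYW i0_ge1 i0_le.
pose img := pt3 X Y W i0.
have cZ k : central img (Z k) by apply: central_pt3.
have class2 (x y : G) : commute [~ x, y] x -> commute [~ x, y] y ->
    [/\ [~ x, y, x] = 1, [~ x, y, y] = 1 & [~ x, y, x / y] = 1].
  by move=> cx cy; split; apply/eqP/commgP => //; apply/commuteM/commuteV.
have [eXYX eXYY eXYXY] := class2 _ _ cXYX cXYY.
have [eYWY eYWW eYWYW] := class2 _ _ cYWY cYWW.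
have adj E i : vanishing2 E -> E X Y = 1 -> E Y W = 1 -> E (img i) (img i.+1) = Z 0.
  by move=> vE eXY eYW; rewrite (pt3_adj E) // eXY eYW !if_same (Z0 ZD).
have far i j : (i + 2 <= j)%N -> [~ img i, img j] = Z 0.
  move=> ij; rewrite (pt3_far (@commg G)) //; last exact: commg_vanishing.
  by rewrite (eqP (introT commgP cXW)) if_same (Z0 ZD).
have quad i : [~ [~ img i, img i.+1], [~ img i.+1, img i.+2]] = Z (if i == i0 then delta else 0).
  by rewrite (pt3_triple (fun x y z => [~ [~ x, y], [~ y, z]])); [exact: if_Z | exact: commgg_vanishing].
have rel : forall r, is_relator n m r -> central img (ev img r).
  apply: relators_central => [i|i j /far ->|i|i|i] //; last by rewrite quad.
  - apply: (pt3_ind (fun x => central img (x ^+ m)));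
    by rewrite ?expg1n ?Xm ?Ym ?Wm; apply: central1.
  - by rewrite (adj (fun x y => [~ x, y, x])) //; apply: commgl_vanishing.
  - by rewrite (adj (fun x y => [~ x, y, y])) //; apply: commgl_vanishing.
have := inRF_trivial rel w_RF.
rewrite (ev_w_elem ZD (fun _ _ => 0) (fun=> 0) (fun=> 0)
          (fun i => if i == i0 then delta else 0)) // => [|i|i].
- have i0_in : i0 \in iota 1 (n - 3) by rewrite mem_iota; lia.
  rewrite big1 => [|i _]; last exact: sum_mul0.
  by rewrite !sum_mul0 sum_delta ?iota_uniq // !add0r.
- by rewrite (adj (fun x y => [~ x, y, x])) //; apply: commgl_vanishing.
- by rewrite (adj (fun x y => [~ x, y, x / y])) //; apply: commgl_vanishing.
Qed.

End Tests.

(* The group UT_5(T) of upper unitriangular 5x5 matrices over a commutative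
   ring [T]; the field [eij] is the (i,j) entry above the diagonal. *)
Section UnitriangularGroup.
Local Open Scope ring_scope.
Variable T : comNzRingType.

Record ut := UT { e12 : T; e13 : T; e14 : T; e15 : T; e23 : T; e24 : T; e25 : T;
                  e34 : T; e35 : T; e45 : T }.

Definition ut_code (a : ut) :=
  (e12 a, e13 a, e14 a, e15 a, e23 a, e24 a, e25 a, e34 a, e35 a, e45 a).
Definition ut_decode (t : T * T * T * T * T * T * T * T * T * T) : ut :=
  let: (a12, a13, a14, a15, a23, a24, a25, a34, a35, a45) := t in
  UT a12 a13 a14 a15 a23 a24 a25 a34 a35 a45.
Lemma ut_codeK : cancel ut_code ut_decode. Proof. by case. Qed.
HB.instance Definition _ := Choice.copy ut (can_type ut_codeK).

Definition ut_mul (a b : ut) : ut :=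
  UT (e12 a + e12 b)
     (e13 a + e13 b + e12 a * e23 b)
     (e14 a + e14 b + e12 a * e24 b + e13 a * e34 b)
     (e15 a + e15 b + e12 a * e25 b + e13 a * e35 b + e14 a * e45 b)
     (e23 a + e23 b)
     (e24 a + e24 b + e23 a * e34 b)
     (e25 a + e25 b + e23 a * e35 b + e24 a * e45 b)
     (e34 a + e34 b)
     (e35 a + e35 b + e34 a * e45 b)
     (e45 a + e45 b).
Definition ut_one : ut := UT 0 0 0 0 0 0 0 0 0 0.
Definition ut_inv (a : ut) : ut :=
  let b45 := - e45 a in
  let b34 := - e34 a in
  let b35 := - e35 a - e34 a * b45 in
  let b23 := - e23 a in
  let b24 := - e24 a - e23 a * b34 in
  let b25 := - e25 a - e23 a * b35 - e24 a * b45 in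
  let b12 := - e12 a in
  let b13 := - e13 a - e12 a * b23 in
  let b14 := - e14 a - e12 a * b24 - e13 a * b34 in
  let b15 := - e15 a - e12 a * b25 - e13 a * b35 - e14 a * b45 in
  UT b12 b13 b14 b15 b23 b24 b25 b34 b35 b45.

Lemma ut_mulA : associative ut_mul.
Proof. by move=> a b c; rewrite /ut_mul /=; congr UT; ring. Qed.
Lemma ut_mul1 : left_id ut_one ut_mul.
Proof. by case=> *; rewrite /ut_mul /=; congr UT; ring. Qed.
Lemma ut_mulg1 : right_id ut_one ut_mul.
Proof. by case=> *; rewrite /ut_mul /=; congr UT; ring. Qed.
Lemma ut_mulV : left_inverse ut_one ut_inv ut_mul.
Proof. by case=> *; rewrite /ut_mul /ut_inv /=; congr UT; ring. Qed.
Lemma ut_mulgV : right_inverse ut_one ut_inv ut_mul.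
Proof. by case=> *; rewrite /ut_mul /ut_inv /=; congr UT; ring. Qed.

HB.instance Definition _ :=
  isGroup.Build ut ut_mulA ut_mul1 ut_mulg1 ut_mulV ut_mulgV.

Lemma ut_mulE (x y : ut) : (x * y)%g = ut_mul x y. Proof. by []. Qed.
Lemma ut_invE (x : ut) : (x^-1)%g = ut_inv x. Proof. by []. Qed.
Lemma ut_oneE : 1%g = ut_one. Proof. by []. Qed.

End UnitriangularGroup.

Ltac ut_compute := rewrite /commg /conjg ?ut_mulE ?ut_invE ?ut_oneE;
  cbv [ut_mul ut_inv ut_one e12 e13 e14 e15 e23 e24 e25 e34 e35 e45]; congr UT.

Section CentralLines.
Local Open Scope ring_scope.
Variable T : comNzRingType.

Definition Z14 (k : int) : ut T := UT 0 0 k%:~R 0 0 0 0 0 0 0.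
Definition Z15 (k : int) : ut T := UT 0 0 0 k%:~R 0 0 0 0 0 0.

Lemma Z14D : {morph Z14 : x y / (x + y)%R >-> (x * y)%g}.
Proof. by move=> x y; rewrite /Z14; ut_compute; rewrite ?intrD; ring. Qed.
Lemma Z15D : {morph Z15 : x y / (x + y)%R >-> (x * y)%g}.
Proof. by move=> x y; rewrite /Z15; ut_compute; rewrite ?intrD; ring. Qed.

Lemma Z14_commute g : e45 g = 0 -> forall k, commute (Z14 k) g.
Proof.
by case: g => ? ? ? ? ? ? ? ? ? ? /= -> k; rewrite /commute /Z14; ut_compute; ring.
Qed.
Lemma Z15_commute g k : commute (Z15 k) g.
Proof. by case: g => *; rewrite /commute /Z15; ut_compute; ring. Qed.

Lemma ut4_expg (a : ut T) k : e15 a = 0 -> e25 a = 0 -> e35 a = 0 -> e45 a = 0 ->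
  (a ^+ k)%g = UT (k%:R * e12 a) (k%:R * e13 a + 'C(k, 2)%:R * e12 a * e23 a)
   (k%:R * e14 a + 'C(k, 2)%:R * (e12 a * e24 a + e13 a * e34 a)
     + 'C(k, 3)%:R * e12 a * e23 a * e34 a) 0
   (k%:R * e23 a) (k%:R * e24 a + 'C(k, 2)%:R * e23 a * e34 a) 0 (k%:R * e34 a) 0 0.
Proof.
case: a => a12 a13 a14 a15 a23 a24 a25 a34 a35 a45 /= -> -> -> ->.
elim: k => [|k IHk]; first by rewrite expg0 ut_oneE !bin_small //; congr UT; ring.
by rewrite expgS IHk !binS bin1 !natrD; ut_compute; ring.
Qed.

End CentralLines.

Arguments Z14_commute {T} g.

Section WitnessA.
Local Open Scope ring_scope.
Variables (T : comNzRingType) (m : nat).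
Hypothesis hm : m%:R = 0 :> T.
Definition XA : ut T := UT 1 0 0 0 0 0 0 0 0 0.
Definition YA : ut T := UT 0 0 0 0 0 1 0 0 0 0.
Lemma XA_YA : [~ XA, YA]%g = Z14 T 1.
Proof. by rewrite /XA /YA /Z14; ut_compute; ring. Qed.
Lemma XA_pow : (XA ^+ m)%g = 1%g.
Proof. by rewrite ut4_expg // /XA; ut_compute; ring: hm. Qed.
Lemma YA_pow : (YA ^+ m)%g = 1%g.
Proof. by rewrite ut4_expg // /YA; ut_compute; ring: hm. Qed.
End WitnessA.

(* Test pair for [b]: X = I + E12 + t E13 + 2 E23 + E34 and Y = X (I + E34)^-1.
   Their m-th powers commute with the pair when 2m = 0 and 2 C(m,2) = -m t. *)
Section WitnessB.
Local Open Scope ring_scope.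
Variables (T : comNzRingType) (t : T).
Definition XB : ut T := UT 1 t 0 0 2 0 0 1 0 0.
Definition YB : ut T := UT 1 t 0 0 2 0 0 0 0 0.
Lemma XB_YB_XB : [~ XB, YB, XB]%g = Z14 T 2.
Proof. by rewrite /XB /YB /Z14; ut_compute; ring. Qed.
Lemma XB_YB_YB : [~ XB, YB, YB]%g = Z14 T 2.
Proof. by rewrite /XB /YB /Z14; ut_compute; ring. Qed.
Lemma XB_YB_XYV : [~ XB, YB, XB / YB]%g = Z14 T 0.
Proof. by rewrite /XB /YB /Z14; ut_compute; ring. Qed.
Variable m : nat.
Hypothesis h2m : 2 * m%:R = 0 :> T.
Hypothesis ht : 2 * 'C(m, 2)%:R = - (m%:R * t) :> T.
Lemma XB_pow : commute (XB ^+ m)%g YB.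
Proof. by rewrite /commute ut4_expg // /XB /YB; ut_compute; ring: h2m ht. Qed.
Lemma YB_pow : commute (YB ^+ m)%g XB.
Proof. by rewrite /commute ut4_expg // /XB /YB; ut_compute; ring: h2m ht. Qed.
End WitnessB.

Section WitnessC.
Local Open Scope ring_scope.
Variables (T : comNzRingType) (k : int).
Definition XC : ut T := UT 0 0 0 0 0 0 0 1 0 0.
Definition YC : ut T := UT k%:~R 0 0 0 1 0 0 0 0 0.
Lemma XC_YC_XC : [~ XC, YC, XC]%g = Z14 T 0.
Proof. by rewrite /XC /YC /Z14; ut_compute; ring. Qed.
Lemma XC_YC_YC : [~ XC, YC, YC]%g = Z14 T k.
Proof. by rewrite /XC /YC /Z14; ut_compute; ring. Qed.
Lemma XC_YC_XYV : [~ XC, YC, XC / YC]%g = Z14 T (- k).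
Proof. by rewrite /XC /YC /Z14; ut_compute; rewrite ?intrN; ring. Qed.
Variable m : nat.
Hypothesis hm : m%:R = 0 :> T.
Hypothesis hkC : 'C(m, 2)%:R * k%:~R = 0 :> T.
Lemma XC_pow : (XC ^+ m)%g = 1%g.
Proof. by rewrite ut4_expg // /XC; ut_compute; ring: hm. Qed.
Lemma YC_pow : (YC ^+ m)%g = 1%g.
Proof. by rewrite ut4_expg // /YC; ut_compute; ring: hm hkC. Qed.
End WitnessC.

Section WitnessD.
Local Open Scope ring_scope.
Variable T : comNzRingType.
Hypothesis h2 : 2 = 0 :> T.
Definition XD : ut T := UT 0 0 0 0 0 0 0 0 0 1.
Definition YD : ut T := UT 1 0 0 0 0 0 0 1 0 0.
Definition WD : ut T := UT 0 0 0 0 1 0 0 0 0 0.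
Lemma XD_WD : commute XD WD.
Proof. by rewrite /commute /XD /WD; ut_compute; ring: h2. Qed.
Lemma XD_YD_XD : commute [~ XD, YD]%g XD.
Proof. by rewrite /commute /XD /YD; ut_compute; ring: h2. Qed.
Lemma XD_YD_YD : commute [~ XD, YD]%g YD.
Proof. by rewrite /commute /XD /YD; ut_compute; ring: h2. Qed.
Lemma YD_WD_YD : commute [~ YD, WD]%g YD.
Proof. by rewrite /commute /WD /YD; ut_compute; ring: h2. Qed.
Lemma YD_WD_WD : commute [~ YD, WD]%g WD.
Proof. by rewrite /commute /WD /YD; ut_compute; ring: h2. Qed.
Lemma XD_YD_YD_WD : [~ [~ XD, YD], [~ YD, WD]]%g = Z15 T 1.
Proof. by rewrite /XD /YD /WD /Z15; ut_compute; ring: h2. Qed.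
Lemma XD_sq : (XD * XD)%g = 1%g. Proof. by rewrite /XD; ut_compute; ring: h2. Qed.
Lemma YD_sq : (YD * YD)%g = 1%g. Proof. by rewrite /YD; ut_compute; ring: h2. Qed.
Lemma WD_sq : (WD * WD)%g = 1%g. Proof. by rewrite /WD; ut_compute; ring: h2. Qed.
End WitnessD.

Section Divisibility.
Local Open Scope ring_scope.

Lemma Zp_intr_eq0 p (k : int) : (1 < p)%N -> (k%:~R : 'Z_p) = 0 -> (p%:Z %| k)%Z.
Proof.
move=> p_gt1; have nat_eq0 j : (j%:R : 'Z_p) = 0 -> (p %| j)%N.
  by move=> j0; rewrite /dvdn -(val_Zp_nat p_gt1) j0.
case: k => j; first by move/nat_eq0; rewrite dvdzE.
by rewrite NegzE mulrNz => /eqP; rewrite oppr_eq0 => /eqP/nat_eq0; rewrite dvdzE abszN.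
Qed.

Lemma Z14_eq1 (T : comNzRingType) k : Z14 T k = 1%g -> k%:~R = 0 :> T.
Proof. by move/(congr1 (@e14 T)). Qed.
Lemma Z15_eq1 (T : comNzRingType) k : Z15 T k = 1%g -> k%:~R = 0 :> T.
Proof. by move/(congr1 (@e15 T)). Qed.

Section Coefficients.
Variables (n m : nat) (a : nat -> nat -> int) (b c d : nat -> int).
Hypothesis m_gt1 : (1 < m)%N.
Hypothesis w_RF : inRF n m (w_elem n a b c d).

Lemma coefficient_a i0 j0 : (1 <= i0)%N -> (i0 + 2 <= j0)%N -> (j0 <= n - 1)%N ->
  (m%:Z %| a i0 j0)%Z.
Proof.
move=> i0_ge1 i0j0 j0_le; have hm : (m%:R : 'Z_m) = 0 by apply: pchar_Zp.
apply: (Zp_intr_eq0 m_gt1); apply: Z14_eq1; rewrite -[a i0 j0]mul1r.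
exact: (far_test (Z14D _) w_RF (Z14_commute (XA _) erefl) (Z14_commute (YA _) erefl)
  (XA_pow hm) (YA_pow hm) (XA_YA _) i0_ge1 i0j0 j0_le).
Qed.

Lemma coefficient_b i0 : (1 <= i0)%N -> (i0 <= n - 2)%N -> (m%:Z %| b i0)%Z.
Proof.
move=> i0_ge1 i0_le; set T := 'Z_(m.*2); set t : T := 1 - m%:R.
have h2m : 2 * m%:R = 0 :> T by rewrite -natrM mul2n pchar_Zp //; lia.
have ht : 2 * 'C(m, 2)%:R = - (m%:R * t) :> T.
  have bin2m : (2 * 'C(m, 2) = m * m.-1)%N by rewrite -[2%N]/(1.+1) mul_bin_left bin1 subn1 mulnC.
  by rewrite -natrM bin2m natrM -subn1 natrB ?natr1; [rewrite /t; ring | lia].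
have := adjacent_test (Z14D T) w_RF (Z14_commute (XB t) erefl) (Z14_commute (YB t) erefl)
  (XB_pow h2m ht) (YB_pow h2m ht)
  (XB_YB_XB t) (XB_YB_YB t) (XB_YB_XYV t) i0_ge1 i0_le.
rewrite mul0r addr0 => /Z14_eq1 /Zp_intr_eq0.
have -> : (m.*2)%:Z = 2 * m%:Z by rewrite -mul2n PoszM.
by rewrite dvdz_mul2l //; apply; lia.
Qed.

Lemma coefficient_c i0 : (1 <= i0)%N -> (i0 <= n - 2)%N -> ((gcdn m 'C(m, 2))%:Z %| c i0)%Z.
Proof.
move=> i0_ge1 i0_le; set T := 'Z_m; set g := gcdn m 'C(m, 2); set k := (m %/ g)%N.
have g_gt0 : (0 < g)%N by rewrite gcdn_gt0; lia.
have m_eq : (k * g = m)%N by rewrite divnK // dvdn_gcdl.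
have hm : (m%:R : T) = 0 by apply: pchar_Zp.
have hkC : 'C(m, 2)%:R * k%:Z%:~R = 0 :> T.
  rewrite -[k%:Z%:~R]/(k%:R) -natrM -(divnK (dvdn_gcdr m 'C(m, 2))) -/g.
  by rewrite -mulnA (mulnC g) m_eq natrM hm mulr0.
have := adjacent_test (Z14D T) w_RF (Z14_commute (XC T) erefl) (Z14_commute (YC T k) erefl) _ _
  (XC_YC_XC _ _) (XC_YC_YC _ _) (XC_YC_XYV _ _) i0_ge1 i0_le.
rewrite (XC_pow hm) (YC_pow hm hkC); do 2 move/(_ (commute_sym (commute1 _))).
rewrite mul0r add0r mulNr => /Z14_eq1 /(Zp_intr_eq0 m_gt1); rewrite rpredN.
have k_neq0 : k%:Z != 0 by rewrite eqz_nat -lt0n divn_gt0 // dvdn_leq ?dvdn_gcdl //; lia.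
by rewrite -m_eq PoszM (mulrC k%:Z (c i0)) (mulrC k%:Z g%:Z) dvdz_mul2r.
Qed.

Lemma coefficient_d i0 : (1 <= i0)%N -> (i0 <= n - 3)%N -> ((gcdn 2 m)%:Z %| d i0)%Z.
Proof.
move=> i0_ge1 i0_le; have [m_odd|m_even] := boolP (odd m).
  by rewrite -gcdn_modr modn2 m_odd gcdn1 dvd1z.
rewrite -gcdn_modr modn2 (negbTE m_even) gcdn0; set T := 'Z_2.
have h2 : 2 = 0 :> T by apply: pchar_Zp.
have pow_m (x : ut T) : (x * x = 1 -> x ^+ m = 1)%g.
  by move=> xx; rewrite -(even_halfK m_even) -mul2n expgnA expg2 xx expg1n.
have := triple_test (Z15D T) w_RF (Z15_commute (XD T))
  (Z15_commute (YD T)) (Z15_commute (WD T))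
  (pow_m _ (XD_sq h2)) (pow_m _ (YD_sq h2)) (pow_m _ (WD_sq h2)) (XD_WD h2)
  (XD_YD_XD h2) (XD_YD_YD h2) (YD_WD_YD h2) (YD_WD_WD h2) (XD_YD_YD_WD h2) i0_ge1 i0_le.
by rewrite mul1r => /Z15_eq1 /Zp_intr_eq0; apply.
Qed.
End Coefficients.
End Divisibility.

Theorem mainTheorem3 (n m : nat) (a : nat -> nat -> int) (b c d : nat -> int) :
  (3 <= n)%N -> (2 <= m)%N -> inRF n m (w_elem n a b c d) ->
  [/\ (forall i j, (1 <= i)%N -> (i + 2 <= j)%N -> (j <= n - 1)%N -> (m%:Z %| a i j)%Z),
      (forall i, (1 <= i)%N -> (i <= n - 2)%N ->
         (m%:Z %| b i)%Z /\ ((gcdn m 'C(m, 2))%:Z %| c i)%Z)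
    & (forall i, (1 <= i)%N -> (i <= n - 3)%N -> ((gcdn 2 m)%:Z %| d i)%Z)].
Proof.
move=> _ m_gt1 w_RF; split => [i j|i i_ge1 i_le|i].
- exact: (coefficient_a m_gt1 w_RF).
- by split; [apply: (coefficient_b m_gt1 w_RF) | apply: (coefficient_c m_gt1 w_RF)].
- exact: (coefficient_d w_RF).
Qed.
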